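(* Let $X$ be a commutative free algebra over $\mathbb{K}$ with a set of free generators $A$, and let $S\subset A$. Let $R\subset\langle S\rangle$ be a set of free generators and let $x\in X\setminus\langle S\rangle$. Then $R\cup\{x\}$ is a set of free generators.
   Context: Algebras are associative linear algebras over $\mathbb{K}$ ($\mathbb{R}$ or $\mathbb{C}$). For a subset $S$ of an algebra, $\langle S\rangle$ is the subalgebra generated by $S$; in the commutative case $\langle S\rangle=\{P(x_1,\dots,x_n): n\in\mathbb{N}, P\in\mathbb{P}_n, x_1,\dots,x_n\in S\}$, where $\mathbb{P}_n$ is the set of polynomials in $n$ variables over $\mathbb{K}$ with no constant term. In a commutative algebra, a subset $S$ is a set of free generators (SFG) if for all $n\in\mathbb{N}$, every non-zero $P\in\mathbb{P}_n$ and all pairwise distinct $x_1,\dots,x_n\in S$ we have $P(x_1,\dots,x_n)\neq0$ (equivalently, the monomials $x_1^{k_1}\cdots x_n^{k_n}$ in distinct elements of $S$ with $k_i\ge1$ form a basis of $\langle S\rangle$). $X$ is a commutative free algebra with SFG $A$ if $A$ is an SFG and $X=\langle A\rangle$. *)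

From mathcomp Require Import all_boot all_order all_algebra.
From mathcomp Require Import mpoly.
Set Implicit Arguments. Unset Strict Implicit. Unset Printing Implicit Defensive.
Import GRing.Theory.
Local Open Scope ring_scope.

Section FreeGen.
Context (K : fieldType) (U : comAlgType K).

Definition peval (n : nat) (P : {mpoly K[n]}) (x : 'I_n -> U) : U :=
  mmap (fun c : K => c%:A) x P.

Definition no_const (n : nat) (P : {mpoly K[n]}) : Prop := P@_0%MM = 0.

Definition gen_alg (S : U -> Prop) : U -> Prop :=
  fun y => exists (n : nat) (P : {mpoly K[n]}) (x : 'I_n -> U),
    [/\ no_const P, (forall i, S (x i)) & y = peval P x].

Definition sfg (S : U -> Prop) : Prop :=
  forall (n : nat) (P : {mpoly K[n]}) (x : 'I_n -> U),
    no_const P -> P != 0 -> injective x -> (forall i, S (x i)) ->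
    peval P x != 0.

End FreeGen.

From Stdlib Require Import ClassicalEpsilon.
From mathcomp Require Import all_boot all_order all_algebra.
From mathcomp Require Import mpoly.
Set Implicit Arguments. Unset Strict Implicit. Unset Printing Implicit Defensive.
Import GRing.Theory.
Local Open Scope ring_scope.

(* Write the elements of R \/ {x} entering a relation P as polynomials q_i in finitely many
   distinct generators from A, those of R only using generators lying in S.  As x is not in
   <S>, q_x involves some generator outside S.  Multiplying every such generator by a new
   variable T leaves the q_i of R unchanged and turns q_x into a nonconstant polynomial in T.
   A nonconstant polynomial over a domain is transcendental over it, so P(q) = 0 would make
   every coefficient of P, read as a polynomial in the x-variable, vanish on the free family
   R.  Hence P(q) <> 0, and the freeness of A turns this into P(R, x) <> 0. *)

Section MmapFacts.
Variables (n : nat) (R : ringType).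
Implicit Types (p : {mpoly R[n]}).

Lemma eq_mmap (T : ringType) (f1 f2 : R -> T) (h1 h2 : 'I_n -> T) p :
  f1 =1 f2 -> h1 =1 h2 -> mmap f1 h1 p = mmap f2 h2 p.
Proof.
by move=> ef eh; apply: eq_bigr => m _; rewrite ef (mmap1_eq _ eh).
Qed.

Lemma rmorph_mmap (T1 T2 : ringType) (F : {rmorphism T1 -> T2})
    (f : R -> T1) (h : 'I_n -> T1) p :
  F (mmap f h p) = mmap (F \o f) (F \o h) p.
Proof.
rewrite rmorph_sum; apply: eq_bigr => m _.
by rewrite rmorphM rmorph_prod; congr (_ * _); apply: eq_bigr => i _; rewrite rmorphXn.
Qed.

Lemma mmapXU (T : ringType) (f : {rmorphism R -> T}) (h : 'I_n -> T) i :
  mmap f h 'X_i = h i.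
Proof. by rewrite mmapX mmap1U. Qed.

Lemma mmap_mpolyC_X p : mmap (@mpolyC n R) (fun i => 'X_i) p = p.
Proof.
by rewrite -[RHS]comp_mpoly_id; apply: eq_mmap => // i; rewrite tnth_mktuple.
Qed.

Lemma mmap1_cst0 (T : comRingType) (m : 'X_{1..n}) :
  mmap1 (fun _ => 0 : T) m = (m == 0%MM)%:R.
Proof.
have [->|nz_m] := eqVneq m 0%MM; first by rewrite mmap11.
have [i nz_mi] : exists i, m i != 0%N.
  apply/existsP; apply: contraNT nz_m => /existsPn m0.
  by apply/eqP/mnmP => i; rewrite mnm0E; apply/eqP; rewrite -[_ == _]negbK m0.
by rewrite /mmap1 (bigD1 i) //= expr0n (negbTE nz_mi) mul0r.
Qed.

Lemma mmap_cst0 (T : comRingType) (f : {additive R -> T}) p :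
  mmap f (fun _ => 0) p = f p@_0%MM.
Proof.
rewrite /mmap (eq_bigr (fun m => if m == 0%MM then f p@_m else 0)); last first.
  by move=> m _; rewrite mmap1_cst0; case: eqP; rewrite ?mulr1 ?mulr0.
rewrite -big_mkcond /=; have [p0|p0] := boolP (0%MM \in msupp p).
  rewrite (big_rem 0%MM) //= eqxx big_seq_cond big1 ?addr0 // => m /andP[].
  by rewrite mem_rem_uniq ?msupp_uniq // inE => /andP[/negbTE ->].
by rewrite big_seq_cond big1 ?(memN_msupp_eq0 p0) ?raddf0 // => m /andP[+ /eqP m0];
  rewrite m0 (negbTE p0).
Qed.

End MmapFacts.

Lemma mcoeff0_mmap (R : comRingType) n m (g : 'I_n -> {mpoly R[m]}) (p : {mpoly R[n]}) :
  (forall i, (g i)@_0%MM = 0) -> (mmap (@mpolyC m R) g p)@_0%MM = p@_0%MM.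
Proof.
move=> g0; rewrite (rmorph_mmap (mcoeff 0%MM)) -[RHS](mmap_cst0 idfun).
by apply: eq_mmap => [c|i] /=; rewrite ?mcoeffC ?eqxx ?mulr1 ?g0.
Qed.

Definition alg_indep (R D : ringType) n (f : R -> D) (h : 'I_n -> D) : Prop :=
  forall p : {mpoly R[n]}, mmap f h p = 0 -> p = 0.

Section MuniAt.
Variables (R : comRingType) (n : nat) (j : 'I_n.+1).

(* [muni] splitting off the variable [j] instead of the last one. *)
Definition muni_at (p : {mpoly R[n.+1]}) : {poly {mpoly R[n]}} :=
  mmap (polyC \o @mpolyC n R)
    (fun i => if unlift j i is Some i' then ('X_i')%:P else 'X) p.

Lemma mmap_muni_at (T : comRingType) (f : {rmorphism R -> T}) (h : 'I_n.+1 -> T)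
    (p : {mpoly R[n.+1]}) :
  mmap f h p = (map_poly (mmap f (h \o lift j)) (muni_at p)).[h j].
Proof.
rewrite -horner_evalE.
rewrite -[RHS]/((horner_eval (h j) \o map_poly (mmap f (h \o lift j))) (muni_at p)).
rewrite rmorph_mmap; apply: eq_mmap => [c|i] /=.
  by rewrite map_polyC horner_evalE hornerC /= mmapC.
rewrite horner_evalE; case: unliftP => [i' ->|->].
  by rewrite map_polyC hornerC /= mmapXU.
by rewrite map_polyX hornerX.
Qed.

Lemma muni_at_eq0 (p : {mpoly R[n.+1]}) : muni_at p = 0 -> p = 0.
Proof.
move=> p0; rewrite -[p]mmap_mpolyC_X (mmap_muni_at (@mpolyC _ R)) p0.
by rewrite rmorph0 horner0.
Qed.

End MuniAt.

Lemma alg_indep_adjoin_nonconst (R : comRingType) (D : idomainType) n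
    (f : {rmorphism R -> D}) (h : 'I_n -> D) (j : 'I_n.+1) (w : {poly D}) :
  alg_indep f h -> (1 < size w)%N ->
  alg_indep (polyC \o f) (fun i => if unlift j i is Some i' then (h i')%:P else w).
Proof.
move=> indep_h w_nonconst p.
set H := fun i => _; rewrite (mmap_muni_at j) {2}/H unlift_none.
have -> : map_poly (mmap (polyC \o f) (H \o lift j)) =1 map_poly (polyC \o mmap f h).
  apply: eq_map_poly => q /=; rewrite (rmorph_mmap polyC).
  by apply: eq_mmap => // i; rewrite /= /H liftK.
rewrite map_poly_comp -[(map_poly polyC _).[w]]/(_ \Po w).
(* a nonconstant polynomial over a domain is transcendental over it *)
move/eqP; rewrite comp_poly_eq0 // => /eqP coefs0.
apply: (muni_at_eq0 (j := j)); apply/polyP => k; rewrite coef0.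
by apply: indep_h; rewrite -coef_map coefs0 coef0.
Qed.

Section Grading.
Variables (R : comRingType) (m : nat) (V : pred 'I_m).
Implicit Types (p : {mpoly R[m]}).

Definition mkeep p : {mpoly R[m]} :=
  mmap (@mpolyC m R) (fun l => if V l then 'X_l else 0) p.

(* Substitutes [X_l * 'X] for the variables outside [V], so that the degree in ['X] is the
   degree in the variables outside [V]. *)
Definition mgrade p : {poly {mpoly R[m]}} :=
  mmap (polyC \o @mpolyC m R) (fun l => if V l then ('X_l)%:P else ('X_l)%:P * 'X) p.

Lemma mgrade_mkeep p : mkeep p = p -> mgrade p = p%:P.
Proof.
move=> <-; rewrite /mgrade /mkeep (rmorph_mmap (mmap _ _)) (rmorph_mmap polyC).
apply: eq_mmap => [c|l] /=; first by rewrite mmapC.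
by case Vl: (V l); rewrite ?raddf0 // mmapXU Vl.
Qed.

Lemma mkeep_mgrade p : (size (mgrade p) <= 1)%N -> mkeep p = p.
Proof.
move=> /size1_polyC grade_cst.
have eval_grade (t : {mpoly R[m]}) :
    (mgrade p).[t] = mmap (@mpolyC m R) (fun l => if V l then 'X_l else 'X_l * t) p.
  rewrite -horner_evalE (rmorph_mmap (horner_eval t)).
  by apply: eq_mmap => [c|l]; rewrite /= horner_evalE ?hornerC //; case: (V l);
    rewrite ?hornerMX hornerC.
have := eval_grade 0; have := eval_grade 1; rewrite grade_cst !hornerC => at1 at0.
rewrite -[RHS]mmap_mpolyC_X; transitivity (mgrade p)`_0; [rewrite at0 | rewrite at1];
  by apply: eq_mmap => // l; case: (V l); rewrite ?mulr0 ?mulr1.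
Qed.

End Grading.

Lemma alg_indep_adjoin_outside (R : idomainType) m (V : pred 'I_m) n
    (q : 'I_n.+1 -> {mpoly R[m]}) (j : 'I_n.+1) :
  alg_indep (@mpolyC m R) (q \o lift j) ->
  (forall i, mkeep V (q (lift j i)) = q (lift j i)) ->
  (1 < size (mgrade V (q j)))%N ->
  alg_indep (@mpolyC m R) q.
Proof.
move=> indep_q keep_q grade_qj p qp0.
apply: (alg_indep_adjoin_nonconst (j := j) indep_q grade_qj).
have : mgrade V (mmap (@mpolyC m R) q p) = 0 by rewrite qp0 /mgrade raddf0.
rewrite {1}/mgrade (rmorph_mmap (mmap _ _)) => <-.
apply: eq_mmap => [c|i] /=; first by rewrite mmapC.
by case: unliftP => [i' ->|->] //; exact/esym/mgrade_mkeep.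
Qed.

Lemma merge_families (T : eqType) k (ks : 'I_k -> nat) (f : forall i, 'I_(ks i) -> T) :
  exists m (b : 'I_m -> T) (g : forall i, 'I_(ks i) -> 'I_m),
    [/\ injective b, forall i l, b (g i l) = f i l & forall l, exists i l', b l = f i l'].
Proof.
pose L := undup (flatten [seq codom (f i) | i <- enum 'I_k]).
have memL i l : f i l \in L.
  by rewrite mem_undup; apply/flatten_mapP; exists i; rewrite ?mem_enum ?codom_f.
exists (size L), (tnth (in_tuple L)).
exists (fun i l => Ordinal (etrans (index_mem _ _) (memL i l))).
split=> [|i l|l]; first exact/tuple_uniqP/undup_uniq.
  by rewrite (tnth_nth (f i l)) nth_index.
have : tnth (in_tuple L) l \in L by exact: mem_tnth.
by rewrite mem_undup => /flatten_mapP[i _ /codomP[l' ->]]; exists i, l'.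
Qed.

Section FreeGenerators.
Variables (K : fieldType) (U : comAlgType K).

Lemma pevalE n (P : {mpoly K[n]}) (x : 'I_n -> U) : peval P x = mmap (in_alg U) x P.
Proof. by []. Qed.

Lemma peval_mmap n m (P : {mpoly K[n]}) (q : 'I_n -> {mpoly K[m]}) (b : 'I_m -> U) :
  peval (mmap (@mpolyC m K) q P) b = peval P (fun i => peval (q i) b).
Proof.
rewrite /peval (rmorph_mmap (mmap (in_alg U) b)).
by apply: eq_mmap => c //=; rewrite mmapC.
Qed.

Lemma sfg_alg_indep (G : U -> Prop) n m (q : 'I_n -> {mpoly K[m]}) (b : 'I_m -> U) :
  sfg G -> (forall i, no_const (q i)) -> injective (fun i => peval (q i) b) ->
  (forall i, G (peval (q i) b)) -> alg_indep (@mpolyC m K) q.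
Proof.
move=> sfgG q0 inj_qb qbG P qP0; apply/eqP; apply: contraT => nzP.
have P0 : no_const P by rewrite /no_const -(mcoeff0_mmap P q0) qP0 mcoeff0.
by have := sfgG _ P _ P0 nzP inj_qb qbG; rewrite -peval_mmap qP0 pevalE raddf0 eqxx.
Qed.

Lemma gen_alg_peval_zero_or (S : U -> Prop) n (P : {mpoly K[n]}) (v : 'I_n -> U) :
  no_const P -> (forall i, v i = 0 \/ S (v i)) -> gen_alg S (peval P v).
Proof.
move=> P0 vS; have [[s Ss]|noS] := classic (exists s, S s).
  pose nz : pred 'I_n := fun i => v i != 0.
  exists n, (mkeep nz P), (fun i => if nz i then v i else s); split.
  - rewrite /no_const mcoeff0_mmap; first exact: P0.
    by move=> i; case: (nz i); rewrite ?mcoeffX ?mnm1_eq0 ?mcoeff0.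
  - move=> i; rewrite /nz; case: (vS i) => [->|Svi]; first by rewrite eqxx.
    by case: ifP.
  rewrite peval_mmap [RHS]pevalE pevalE; apply: eq_mmap => // i.
  rewrite /nz pevalE /=; have [->|nzi] := eqVneq (v i) 0; first by rewrite raddf0.
  by rewrite mmapXU nzi.
have v0 i : v i = 0 by case: (vS i) => // Svi; case: noS; exists (v i).
exists 0%N, 0, (fun _ => 0); split; [exact: mcoeff0 | by case |].
by rewrite !pevalE raddf0 (eq_mmap P (frefl _) v0) mmap_cst0 P0 raddf0.
Qed.

Lemma gen_alg_peval_mkeep (S : U -> Prop) m (V : pred 'I_m) (q : {mpoly K[m]})
    (b : 'I_m -> U) :
  no_const q -> mkeep V q = q -> (forall l, V l -> S (b l)) -> gen_alg S (peval q b).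
Proof.
move=> q0 keep_q VS; rewrite -keep_q peval_mmap.
apply: gen_alg_peval_zero_or => // l; rewrite pevalE.
by case Vl: (V l); [right; rewrite mmapXU; apply: VS | left; rewrite raddf0].
Qed.

Lemma gen_alg_common_gens k (B : 'I_k -> U -> Prop) (y : 'I_k -> U) :
  (forall i, gen_alg (B i) (y i)) ->
  exists m (b : 'I_m -> U) (q : 'I_k -> {mpoly K[m]}),
    [/\ injective b, forall l, exists i, B i (b l), forall i, no_const (q i),
        forall i, y i = peval (q i) b
      & forall i (V : pred 'I_m), (forall l, B i (b l) -> V l) -> mkeep V (q i) = q i].
Proof.
move=> yB; pose Repr := {kk : nat & ({mpoly K[kk]} * ('I_kk -> U))%type}.
pose represents i (z : Repr) := [/\ no_const (projT2 z).1, forall l, B i ((projT2 z).2 l)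
  & y i = peval (projT2 z).1 (projT2 z).2].
have [rep repP] : exists rep : 'I_k -> Repr, forall i, represents i (rep i).
  apply: choice => i.
  by have [kk [Q [f [Q0 fB yQ]]]] := yB i; exists (existT _ kk (Q, f)).
have [m [b [g [b_inj bg bf]]]] := merge_families (fun i => (projT2 (rep i)).2).
exists m, b, (fun i => mmap (@mpolyC m K) (fun l => 'X_(g i l)) (projT2 (rep i)).1).
split=> [//|l|i|i|i V BV].
- by have [i [l' ->]] := bf l; exists i; have [_ fB _] := repP i.
- rewrite /no_const mcoeff0_mmap => [|l]; first by have [] := repP i.
  by rewrite mcoeffX mnm1_eq0.
- rewrite peval_mmap; have [_ _ ->] := repP i.
  by apply: eq_mmap => // l; rewrite /= pevalE mmapXU bg.
rewrite /mkeep (rmorph_mmap (mmap _ _)); apply: eq_mmap => [c|l] /=; first by rewrite mmapC.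
by rewrite mmapXU BV // bg; have [_ fB _] := repP i.
Qed.

Lemma peval_adjoin_neq0 (A S G : U -> Prop) (x : U) n (y : 'I_n.+1 -> U) (j : 'I_n.+1)
    (P : {mpoly K[n.+1]}) :
  sfg A -> (forall a, S a -> A a) -> (forall r, G r -> gen_alg S r) -> sfg G ->
  gen_alg A x -> ~ gen_alg S x ->
  injective y -> y j = x -> (forall i, G (y (lift j i))) ->
  no_const P -> P != 0 -> peval P y != 0.
Proof.
move=> sfgA SA GS sfgG Ax Sx_not y_inj yj yG P0 nzP.
pose B i := if i == j then A else S.
have [|m [b [q [b_inj bB q0 yq keep_q]]]] := gen_alg_common_gens (B := B) (y := y).
  move=> i; rewrite /B; case: (unliftP j i) => [i' ->|->]; last by rewrite eqxx yj.
  by rewrite eq_sym (negbTE (neq_lift _ _)); apply: GS.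
pose V l : bool := excluded_middle_informative (S (b l)).
have VS l : V l -> S (b l) by rewrite /V; case: excluded_middle_informative.
have keep_lift i : mkeep V (q (lift j i)) = q (lift j i).
  apply: keep_q => l; rewrite /B eq_sym (negbTE (neq_lift _ _)) /V.
  by case: excluded_middle_informative.
have grade_qj : (1 < size (mgrade V (q j)))%N.
  rewrite ltnNge; apply/negP => /mkeep_mgrade keep_qj; apply: Sx_not.
  by rewrite -yj yq; apply: gen_alg_peval_mkeep keep_qj VS.
have indep_q : alg_indep (@mpolyC m K) q.
  apply: alg_indep_adjoin_outside keep_lift grade_qj.
  apply: (sfg_alg_indep (b := b) sfgG) => [i|i i'|i]; first exact: q0.
    by rewrite /= -!yq => /y_inj/lift_inj.
  by rewrite /= -yq.
have -> : peval P y = peval (mmap (@mpolyC m K) q P) b.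
  by rewrite peval_mmap; apply: eq_mmap.
apply: sfgA => //; first by rewrite /no_const mcoeff0_mmap.
  by apply: contra nzP => /eqP/indep_q ->.
by move=> l; have [i] := bB l; rewrite /B; case: eqP => _ //; apply: SA.
Qed.

End FreeGenerators.

Theorem lemma4p2 (K : fieldType) (U : comAlgType K)
  (A S R : U -> Prop) (x : U) :
  sfg A ->
  (forall a, S a -> A a) ->
  (forall r, R r -> gen_alg S r) ->
  sfg R ->
  gen_alg A x ->
  ~ gen_alg S x ->
  sfg (fun y => R y \/ y = x).
Proof.
move=> sfgA SA RS sfgR Ax Sx_not n P y P0 nzP y_inj yRx.
have [/existsP[j /eqP yj]|/existsP x_notin] := boolP [exists j, y j == x]; last first.
  apply: sfgR => // i; case: (yRx i) => // yi.
  by case: x_notin; exists i; rewrite yi.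
case: n P y j yj P0 nzP y_inj yRx => [|n] P y j; first by case: j.
move=> yj P0 nzP y_inj yRx.
apply: (peval_adjoin_neq0 sfgA SA RS sfgR Ax Sx_not y_inj yj) => // i.
case: (yRx (lift j i)) => //; rewrite -yj => /y_inj/eqP.
by rewrite eq_sym (negbTE (neq_lift _ _)).
Qed.
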